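(* Consider $\mathsf{SGDsub}$ run for $T$ steps with batch parameter $B$. Suppose $B\ge\frac{100\log(T/\delta)}{\epsilon}$, $\epsilon\le c_0$ for a suitable absolute constant $c_0>0$, and $\upsilon=0.9B+\frac{2\log(T/\delta)}{\epsilon}$. Suppose that for every point $Y\in\mathbb{R}^d$, $|\{i\in[B]:q_1(Z_{i,1})\in B_\infty(Y,1/\tau)\}|<B/3$. Then with probability at least $1-\delta/(T e^{\epsilon})$, the AboveThreshold procedure returns $a_1=\bot$.
   Context: $\mathsf{SGDsub}$: users are split into groups $\{Z_{i,t}\}_{t\in[T]}$, $i\in[B]$, each user a set of $m$ data points; with iterates $x_t$, $q_t(Z_{i,t})=\frac1m\sum_{z\in Z_{i,t}}\nabla f(x_{t-1};z)$. Concentration scores $s_t=\frac1B\sum_{i,j\in[B]}\exp(-\tau\|q_t(Z_{i,t})-q_t(Z_{j,t})\|_\infty)$. AboveThreshold with privacy $\epsilon/2$ and threshold $\upsilon$: draw $\hat\upsilon=\upsilon-\mathrm{Lap}(4/\epsilon)$; for $t=1,\dots,T$ draw $\nu_t\sim\mathrm{Lap}(8/\epsilon)$; if $s_t+\nu_t<\hat\upsilon$ output $a_t=\bot$ and halt, else output $a_t=\top$. $\mathrm{Lap}(b)$ is the Laplace distribution of scale $b$. *)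

From mathcomp Require Import all_boot all_order all_algebra.
From mathcomp Require Import all_classical all_reals all_analysis.
Set Implicit Arguments. Unset Strict Implicit. Unset Printing Implicit Defensive.
Import Order.TTheory GRing.Theory Num.Theory.
Local Open Scope ring_scope.

Definition linf (R : realType) (d : nat) (v : 'rV[R]_d) : R :=
  \big[Num.max/0]_(k < d) `|v ord0 k|.

Definition qavg (R : realType) (d : nat) (Z : Type) (m : nat)
  (grad : 'rV[R]_d -> Z -> 'rV[R]_d) (x : 'rV[R]_d) (Zi : m.-tuple Z) : 'rV[R]_d :=
  m%:R^-1 *: \sum_(z <- Zi) grad x z.

Definition conc_score (R : realType) (d B : nat) (q : 'I_B -> 'rV[R]_d) (tau : R) : R :=
  B%:R^-1 * \sum_(i < B) \sum_(j < B) expR (- (tau * linf (q i - q j))).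

Definition lap_pdf (R : realType) (b x : R) : R := (2 * b)^-1 * expR (- (`|x| / b)).

Inductive AT_out := Bot | Top.

(* First step of AboveThreshold: hat upsilon = ups - u (u ~ Lap(4/eps)),
   nu_1 = v (v ~ Lap(8/eps)); output bot iff s_1 + nu_1 < hat upsilon. *)
Definition AT_step1 (R : realType) (s ups u v : R) : AT_out :=
  if s + v < ups - u then Bot else Top.

Definition prob_AT1_bot (R : realType) (s ups eps : R) : \bar R :=
  (\int[@lebesgue_measure R]_u
     \int[@lebesgue_measure R]_v
        ((lap_pdf (4 / eps) u * lap_pdf (8 / eps) v *
          (if AT_step1 s ups u v is Bot then 1 else 0))%:E))%E.

(* If no l_oo-ball of radius 1/tau holds B/3 of the gradients, each row of the score matrix
   has fewer than B/3 entries above exp(-1) < 1/2 (and none above 1), so s_1 <= 2B/3 and the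
   threshold exceeds s_1 by a margin c >= 7B/30 + 2 log(T/delta)/eps.  AboveThreshold outputs
   bot as soon as the threshold noise is below c/3 and the query noise below 2c/3; each of
   these independent Laplace events fails with probability exp(-c eps/12)/2, and
   B >= 100 log(T/delta)/eps makes exp(-c eps/12) <= delta/(T exp eps). *)

From mathcomp Require Import all_boot all_order all_algebra.
From mathcomp Require Import all_classical all_reals all_analysis.
From mathcomp Require Import measurable_realfun.
From mathcomp.algebra_tactics Require Import ring lra.
Import Order.TTheory GRing.Theory Num.Theory.
Import numFieldNormedType.Exports.
Local Open Scope ring_scope.

Section ge0_integral.
Local Open Scope ereal_scope.
Context {d} {T : measurableType d} {R : realType} (mu : {measure set T -> \bar R}).

(* [g] need not be measurable: the integral of a nonnegative function is a
   supremum over its simple minorants. *)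
Lemma ge0_le_integralT (f g : T -> \bar R) : (forall x, 0 <= f x) ->
  (forall x, f x <= g x) -> \int[mu]_x f x <= \int[mu]_x g x.
Proof.
move=> f0 fg.
have g0 x : 0 <= g x by exact: le_trans (f0 x) (fg x).
rewrite (ge0_integralTE mu f0) (ge0_integralTE mu g0).
apply: ereal_sup_le => _ [h hf <-]; exists h => //= x.
exact: le_trans (hf x) (fg x).
Qed.

End ge0_integral.

Section integral2_mul.
Local Open Scope classical_set_scope.
Local Open Scope ereal_scope.
Context {d1 d2} {T1 : measurableType d1} {T2 : measurableType d2} {R : realType}.
Variables (mu : {measure set T1 -> \bar R}) (nu : {measure set T2 -> \bar R}).

Lemma ge0_le_integral2_mul (A : set T1) (B : set T2)
    (f : T1 -> R) (g : T2 -> R) (h : T1 -> T2 -> R) (p q : R) :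
  measurable A -> measurable B -> measurable_fun A f -> measurable_fun B g ->
  (forall x, A x -> 0 <= f x)%R -> (forall y, B y -> 0 <= g y)%R ->
  (0 <= q)%R -> p%:E <= \int[mu]_(x in A) (f x)%:E ->
  q%:E <= \int[nu]_(y in B) (g y)%:E ->
  (forall x y, 0 <= h x y)%R -> (forall x y, A x -> B y -> f x * g y <= h x y)%R ->
  (p * q)%:E <= \int[mu]_x \int[nu]_y (h x y)%:E.
Proof.
move=> mA mB mf mg f0 g0 q0 pf qg h0 fgh.
pose F : T1 -> R := f \_ A; pose G : T2 -> R := g \_ B.
have F0 x : (0 <= F x)%R by rewrite /F patchE; case: ifPn => // /set_mem /f0.
have G0 y : (0 <= G y)%R by rewrite /G patchE; case: ifPn => // /set_mem /g0.
have mF : measurable_fun setT F by exact/(measurable_restrictT f mA).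
have mG : measurable_fun setT G by exact/(measurable_restrictT g mB).
have intF : \int[mu]_x (F x)%:E = \int[mu]_(x in A) (f x)%:E.
  by rewrite [RHS]integral_mkcond restrict_EFin.
have intG : \int[nu]_y (G y)%:E = \int[nu]_(y in B) (g y)%:E.
  by rewrite [RHS]integral_mkcond restrict_EFin.
have inner x : (q * F x)%:E <= \int[nu]_y (h x y)%:E.
  have Fgh y : (F x * G y <= h x y)%R.
    rewrite /F /G !patchE; case: ifPn => [/set_mem Ax|_]; last by rewrite mul0r.
    by case: ifPn => [/set_mem By|_]; [exact: fgh | rewrite mulr0].
  apply: (@le_trans _ _ (\int[nu]_y (F x * G y)%:E)); last first.
    by apply: ge0_le_integralT => y; rewrite lee_fin ?mulr_ge0.
  under eq_integral do rewrite EFinM.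
  rewrite ge0_integralZl_EFin //.
  - by rewrite mulrC EFinM lee_wpmul2l ?lee_fin // intG.
  - by move=> y _; rewrite lee_fin.
  - exact/measurable_EFinP.
apply: (@le_trans _ _ (\int[mu]_x (q * F x)%:E)); last first.
  by apply: ge0_le_integralT => // x; rewrite lee_fin mulr_ge0.
under eq_integral do rewrite EFinM.
rewrite ge0_integralZl_EFin //.
- by rewrite mulrC EFinM lee_wpmul2l ?lee_fin // intF.
- by move=> x _; rewrite lee_fin.
- exact/measurable_EFinP.
Qed.

End integral2_mul.

Section laplace.
Local Open Scope classical_set_scope.
Context {R : realType}.
Local Notation mu := (@lebesgue_measure R).

Lemma lap_pdf_ge0 (b x : R) : 0 <= b -> 0 <= lap_pdf b x.
Proof. by move=> b0; rewrite mulr_ge0 ?expR_ge0 // invr_ge0 mulr_ge0. Qed.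

Lemma lap_pdfN (b x : R) : lap_pdf b (- x) = lap_pdf b x.
Proof. by rewrite /lap_pdf normrN. Qed.

Lemma measurable_lap_pdf (b : R) : measurable_fun setT (lap_pdf b).
Proof.
apply: measurable_funM => //; apply: measurableT_comp => //.
by apply: measurable_funN; apply: measurable_funM => //; exact: measurable_normr.
Qed.

Lemma lap_pdf_exponential (b x : R) : 0 <= b -> 0 <= x ->
  lap_pdf b x = 2^-1 * exponential_pdf b^-1 x.
Proof.
move=> b0 x0; rewrite exponential_pdfE ?invr_ge0 // /lap_pdf ger0_norm //.
by rewrite invfM -mulrA mulNr [b^-1 * x]mulrC.
Qed.

Lemma integral_lap_pdf_exponential (b : R) (D : set R) : 0 <= b ->
  measurable D -> D `<=` `[0, +oo[ ->
  (\int[mu]_(x in D) (lap_pdf b x)%:E = (2^-1)%:E * exponential_prob b^-1 D)%E.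
Proof.
move=> b0 mD D0; rewrite -ge0_integralZl_EFin //.
- apply: eq_integral => x /[!inE] /D0 /=; rewrite in_itv /= andbT => x0.
  by rewrite -EFinM lap_pdf_exponential.
- by move=> x _; rewrite lee_fin exponential_pdf_ge0 ?invr_ge0.
- by apply/measurable_EFinP/measurable_funTS; exact: measurable_exponential_pdf.
Qed.

Lemma exponential_prob_itv0y (r : R) : 0 < r -> exponential_prob r `[0, +oo[ = 1%E.
Proof.
move=> r0; rewrite -(integral_exponential_pdf r0) -(itv_setU_setT true 0).
rewrite ge0_integral_setU //=.
- rewrite [X in (X + _)%E]integral0_eq ?add0e // => x; rewrite /= in_itv /= => x0.
  by rewrite lt0_exponential_pdf.
- by rewrite itv_setU_setT; apply/measurable_EFinP; exact: measurable_exponential_pdf.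
- by move=> x _; rewrite lee_fin exponential_pdf_ge0 // ltW.
- exact: disjoint_rays.
Qed.

Lemma integral_lap_pdf_itvNy0 (b : R) : 0 < b ->
  (\int[mu]_(x in `]-oo, 0%R]) (lap_pdf b x)%:E = (2^-1)%:E)%E.
Proof.
move=> b0; under eq_integral do rewrite -lap_pdfN.
rewrite -(ge0_integration_by_substitution0 (f := fun x => (lap_pdf b x)%:E)).
- rewrite integral_lap_pdf_exponential ?ltW //.
  by rewrite exponential_prob_itv0y ?invr_gt0 ?mule1.
- by apply/measurable_EFinP; exact: measurable_lap_pdf.
- by move=> x; rewrite lee_fin lap_pdf_ge0 ?ltW.
Qed.

Lemma lap_cdf (b t : R) : 0 < b -> 0 < t ->
  (\int[mu]_(x in `]-oo, t[) (lap_pdf b x)%:E = (1 - 2^-1 * expR (- (t / b)))%:E)%E.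
Proof.
move=> b0 t0; rewrite (@itv_bndbnd_setU _ _ _ (BLeft 0)) ?bnd_simp ?ltW //.
rewrite ge0_integral_setU //=.
- rewrite !integral_itv_bndo_bndc; last 2 first.
  + by apply/measurable_EFinP/measurable_funTS; exact: measurable_lap_pdf.
  + by apply/measurable_EFinP/measurable_funTS; exact: measurable_lap_pdf.
  rewrite integral_lap_pdf_itvNy0 // integral_lap_pdf_exponential ?ltW //; last first.
    by apply: subset_itvl; rewrite bnd_simp.
  rewrite exponential_prob_itv0c // -EFinB -EFinM -EFinD; congr (_%:E).
  by rewrite mulNr [b^-1 * t]mulrC; field.
- by apply/measurable_EFinP/measurable_funTS; exact: measurable_lap_pdf.
- by move=> x _; rewrite lee_fin lap_pdf_ge0 ?ltW.
- apply: lt_disjoint => x y; rewrite !in_itv /= => x0 /andP[y0 _].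
  exact: lt_le_trans x0 y0.
Qed.

End laplace.

Section concentration_score.
Context {R : realType}.

Lemma linf_ge0 (d : nat) (v : 'rV[R]_d) : 0 <= linf v.
Proof.
rewrite /linf; apply: (big_ind (fun x => 0 <= x)) => // x y x0 _.
by rewrite le_max x0.
Qed.

Lemma expRN1_le_half : expR (-1) <= 2^-1 :> R.
Proof.
rewrite expRN lef_pV2 ?posrE ?expR_gt0 //.
by have := expR_ge1Dx (1 : R); lra.
Qed.

Lemma expRNM_le_step (t l : R) : 0 < t -> 0 <= l ->
  expR (- (t * l)) <= 2^-1 + 2^-1 * (l < t^-1)%R%:R.
Proof.
move=> t0 l0; case: ltP => [_ | tl].
  have : expR (- (t * l)) <= 1 by rewrite expR_le1 oppr_le0 mulr_ge0 // ltW.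
  rewrite mulr1; lra.
rewrite mulr0 addr0; apply: le_trans expRN1_le_half.
by rewrite ler_expR lerN2 -(mulfV (lt0r_neq0 t0)) ler_wpM2l // ltW.
Qed.

Lemma conc_score_le (d B : nat) (q : 'I_B -> 'rV[R]_d) (tau : R) : 0 < tau ->
  (forall Y, #|[set i | linf (q i - Y) < tau^-1]|%:R <= B%:R / 3 :> R) ->
  conc_score q tau <= 2 / 3 * B%:R.
Proof.
move=> tau0 hS.
have row j : \sum_(i < B) expR (- (tau * linf (q i - q j))) <= 2 / 3 * B%:R.
  apply: (@le_trans _ _ (\sum_(i < B) (2^-1 + 2^-1 * (linf (q i - q j) < tau^-1)%R%:R))).
    by apply: ler_sum => i _; exact/expRNM_le_step/linf_ge0.
  rewrite big_split /= -mulr_sumr sumr_const card_ord -natr_sum.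
  have -> : (\sum_(i < B) ((linf (q i - q j) < tau^-1)%R : nat))%N =
            #|[set i | linf (q i - q j) < tau^-1]|.
    by rewrite -sum1dep_card [RHS]big_mkcond; apply: eq_bigr => i _; case: ifP.
  have := hS (q j); rewrite -mulr_natr; lra.
rewrite /conc_score exchange_big /=.
apply: le_trans (ler_wpM2l _ (ler_sum _ (fun j _ => row j))) _.
  by rewrite invr_ge0.
rewrite sumr_const card_ord -[X in _ * X]mulr_natr mulrCA.
have [-> | B0] := eqVneq (B%:R : R) 0; first by rewrite !mulr0.
by rewrite mulVf // mulr1.
Qed.

End concentration_score.

Section above_threshold.
Local Open Scope classical_set_scope.
Context {R : realType}.

(* Splitting the margin [c] as [c/3 + 2c/3] equalizes the two Laplace tails:
   both noises exceed their share with probability [expR (- (c * eps / 12)) / 2]. *)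
Lemma prob_AT1_bot_ge (s ups eps c : R) : 0 < eps -> 0 < c -> c <= ups - s ->
  (((1 - 2^-1 * expR (- (c * eps / 12))) ^+ 2)%:E <= prob_AT1_bot s ups eps)%E.
Proof.
move=> eps0 c0 margin.
have tail (k : R) : 0 < k -> (1 - 2^-1 * expR (- (c * eps / 12)))%:E =
    (\int[lebesgue_measure]_(x in `]-oo, (k * c / 12)%R[) (lap_pdf (k / eps) x)%:E)%E.
  move=> k0; rewrite lap_cdf ?divr_gt0 ?mulr_gt0 //; congr (_%:E).
  by congr (1 - 2^-1 * expR (- _)); field; rewrite !lt0r_neq0.
have lap0 b x : 0 < b -> 0 <= lap_pdf b x by move=> /ltW; exact: lap_pdf_ge0.
rewrite expr2 /prob_AT1_bot.
apply: (ge0_le_integral2_mul lebesgue_measure lebesgue_measure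
  `]-oo, (4 * c / 12)%R[ `]-oo, (8 * c / 12)%R[ (lap_pdf (4 / eps)) (lap_pdf (8 / eps))) => //.
- apply: measurable_funTS; exact: measurable_lap_pdf.
- apply: measurable_funTS; exact: measurable_lap_pdf.
- by move=> x _; rewrite lap0 ?divr_gt0.
- by move=> y _; rewrite lap0 ?divr_gt0.
- have : expR (- (c * eps / 12)) <= 1.
    by rewrite expR_le1 oppr_le0 divr_ge0 ?mulr_ge0 ?ltW.
  lra.
- by rewrite (tail 4).
- by rewrite (tail 8).
- move=> u v; apply: mulr_ge0; last by case: AT_step1.
  by apply: mulr_ge0; apply: lap0; exact: divr_gt0.
- move=> u v; rewrite /= !in_itv /= => uc vc.
  by rewrite /AT_step1 ifT ?mulr1 //; lra.
Qed.

End above_threshold.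

Lemma le_sqr_one_sub_half_expR {R : realType} (eps L c : R) :
  0 < eps -> eps <= 1 / 100 -> 0 < L -> 25 * L <= c * eps ->
  1 - expR (- (L + eps)) <= (1 - 2^-1 * expR (- (c * eps / 12))) ^+ 2.
Proof.
move=> eps0 eps_small L0 margin.
set x := expR (- (c * eps / 12)).
(* For [L + eps <= 1/4] the left side is at most [1/4]; otherwise [eps <= L/24],
   whence [12 (L + eps) <= 25 L <= c eps]. *)
have x1 : x <= 1 by rewrite expR_le1 oppr_le0; lra.
have x0 : 0 < x := expR_gt0 _.
have sqr_ge : 1 - x <= (1 - 2^-1 * x) ^+ 2 by rewrite expr2; nra.
have quarter_le : 4^-1 <= (1 - 2^-1 * x) ^+ 2 by rewrite expr2; nra.
have := expR_ge1Dx (- (L + eps)).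
case: (leP (L + eps) 4^-1) => [small | big]; first lra.
have : x <= expR (- (L + eps)) by rewrite ler_expR lerN2; lra.
lra.
Qed.

Theorem lemma3p8 :
  exists c0 : rat, 0 < c0 /\
  forall (R : realType) (d B T m : nat) (Z : Type)
    (grad : 'rV[R]_d -> Z -> 'rV[R]_d) (x0 : 'rV[R]_d)
    (data : 'I_B -> m.-tuple Z) (tau eps delta : R),
    (0 < m)%N -> (0 < T)%N -> 0 < tau -> 0 < eps -> eps <= ratr c0 ->
    0 < delta -> delta < 1 ->
    100 * ln (T%:R / delta) / eps <= B%:R ->
    (forall Y : 'rV[R]_d,
        #|[set i : 'I_B | linf (qavg grad x0 (data i) - Y) < tau^-1]|%:R
          < B%:R / 3 :> R) ->
    let ups := 9 / 10 * B%:R + 2 * ln (T%:R / delta) / eps in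
    let s1 := conc_score (fun i => qavg grad x0 (data i)) tau in
    ((1 - delta / (T%:R * expR eps))%:E <= prob_AT1_bot s1 ups eps)%E.
Proof.
exists (1 / 100); split => // R d B T m Z grad x0 data tau eps delta _ T0 tau0 eps0.
rewrite [ratr _]fmorph_div rmorph1 rmorph_nat => eps_small delta0 delta1 hB hconc.
cbv zeta; set ups := (9 / 10 * _ + _); set s1 := conc_score _ _.
have Tdelta : 1 < T%:R / delta.
  by rewrite ltr_pdivlMr // mul1r (lt_le_trans delta1) // ler1n.
have L0 : 0 < ln (T%:R / delta) by rewrite ln_gt0.
have deltaE : delta / (T%:R * expR eps) = expR (- (ln (T%:R / delta) + eps)).
  rewrite expRN expRD lnK ?posrE ?(lt_trans ltr01 Tdelta) //.
  by field; rewrite !lt0r_neq0 ?expR_gt0 ?ltr0n.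
have s1_le : s1 <= 2 / 3 * B%:R by apply: conc_score_le => // Y; exact/ltW/hconc.
have margin : 25 * ln (T%:R / delta) <= (ups - s1) * eps.
  have hBe : 100 * ln (T%:R / delta) <= B%:R * eps by rewrite -ler_pdivrMr.
  have upsE : ups * eps = 9 / 10 * (B%:R * eps) + 2 * ln (T%:R / delta).
    by rewrite /ups; field; rewrite lt0r_neq0.
  have := ler_wpM2r (ltW eps0) s1_le.
  rewrite mulrBl upsE; lra.
have gap : 0 < ups - s1 by rewrite -(pmulr_lgt0 _ eps0); lra.
apply: le_trans (prob_AT1_bot_ge _ _ _ _ eps0 gap (lexx _)).
by rewrite lee_fin deltaE; exact: le_sqr_one_sub_half_expR.
Qed.
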